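(* Let $T$ be a decomposition tree of a distance-hereditary graph $G$, and let $v$ be an internal node of $T$ labeled $\oplus$ with left child $v_l$ and right child $v_r$, such that property (P) holds at $v_l$ and at $v_r$. Assume that $\hat\alpha(v_r)\le\hat\beta(v_l)$, and that neither ($\hat\alpha(v_l)=\hat\beta(v_r)=0$) nor ($\hat\alpha(v_r)=\hat\beta(v_l)=0$) holds. Then $\hat\beta(v)=\hat\beta(v_l)-\hat\alpha(v_r)$.
   Context: All graphs are finite, simple, undirected. For a graph $H$ and $S\subseteq V(H)$, $N_H[S]$ is $S$ together with all vertices adjacent to a vertex of $S$, and $H[S]$ is the induced subgraph. Graphs carry a ''twin set'': a single-vertex graph on $x$ has twin set $\{x\}$. For vertex-disjoint graphs $G_l,G_r$ with twin sets $TS(G_l),TS(G_r)$: the true twin operation $G_l\otimes G_r$ has vertex set $V(G_l)\cup V(G_r)$, edge set $E(G_l)\cup E(G_r)\cup\{uw: u\in TS(G_l), w\in TS(G_r)\}$ and twin set $TS(G_l)\cup TS(G_r)$; the false twin operation $G_l\odot G_r$ has vertex set $V(G_l)\cup V(G_r)$, edge set $E(G_l)\cup E(G_r)$, twin set $TS(G_l)\cup TS(G_r)$; the attachment operation $G_l\oplus G_r$ has the same vertex and edge sets as $G_l\otimes G_r$ and twin set $TS(G_l)$. A decomposition tree $T$ of $G$ is a rooted binary tree whose leaves are in bijection with $V(G)$, each internal node having a left and a right child and a label in $\{\otimes,\odot,\oplus\}$; for each node $v$ define $\hat G(v)$ and $\hat{TS}(v)$ recursively: for a leaf $x$, the single-vertex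 graph on $x$ with twin set $\{x\}$; for an internal node $v$ with label $\circ$ and children $v_l,v_r$, $\hat G(v)=\hat G(v_l)\circ\hat G(v_r)$ with the corresponding twin set; one requires $\hat G(\text{root})=G$. Then $\hat G(v)$ is the subgraph of $G$ induced by the set $\hat V(v)$ of leaves below $v$. For a node $u$ and $0\le k\le|\hat{TS}(u)|$, call $S\subseteq\hat V(u)$ $k$-feasible if $\hat V(u)\setminus\hat{TS}(u)\subseteq N_{\hat G(u)}[S]$ and there is $X\subseteq S\cap\hat{TS}(u)$ with $|X|=k$ such that $\hat G(u)[S\setminus X]$ has a perfect matching. $\hat\gamma_k(u)$ is the minimum size of a $k$-feasible set. $\hat{min}(u)=\min\{\hat\gamma_k(u):0\le k\le|\hat{TS}(u)|\}$, and $\hat\alpha(u)$, $\hat\beta(u)$ are the smallest and the largest $k$ with $\hat\gamma_k(u)=\hat{min}(u)$. Property (P) holds at $u$ if for every $0\le k\le|\hat{TS}(u)|$: $\hat\gamma_k(u)=\hat{min}(u)+\hat\alpha(u)-k$ when $k\le\hat\alpha(u)$; $\hat\gamma_k(u)=\hat{min}(u)+k-\hat\beta(u)$ when $k\ge\hat\beta(u)$; $\hat\gamma_k(u)=\hat{min}(u)$ when $\hat\alpha(u)<k<\hat\beta(u)$ and $k-\hat\alpha(u)$ is even; and $\hat\gamma_k(u)=\hat{min}(u)+1$ otherwise. *)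

From mathcomp Require Import all_boot.
Set Implicit Arguments. Unset Strict Implicit. Unset Printing Implicit Defensive.

(* A graph G is a finite vertex type V with an adjacency relation e : rel V,
   assumed symmetric and irreflexive (simple undirected graph). *)

Definition walk_in (V : finType) (e : rel V) (S : {set V}) (x y : V) (k : nat) : Prop :=
  exists p : seq V, [/\ path e x p, last x p = y, all (fun z => z \in S) (x :: p)
                      & size p <= k].

(* distance-hereditary: every connected induced subgraph G[S] is isometric,
   i.e. d_{G[S]}(x,y) <= d_G(x,y) (the converse inequality is automatic). *)
Definition dist_hereditary (V : finType) (e : rel V) : Prop :=
  forall S : {set V},
    (forall x y, x \in S -> y \in S -> exists k, walk_in e S x y k) ->
    forall x y k, x \in S -> y \in S -> walk_in e [set: V] x y k -> walk_in e S x y k.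

Inductive dop := OTrue (* true twin, ⊗ *) | OFalse (* false twin, ⊙ *) | OAttach (* ⊕ *).

Inductive dtree (V : Type) := Leaf of V | Node of dop & dtree V & dtree V.
Arguments Leaf {V}. Arguments Node {V}.

Section Hat.
Variable V : finType.

Fixpoint leaves (t : dtree V) : seq V :=
  match t with Leaf x => [:: x] | Node _ l r => leaves l ++ leaves r end.

Fixpoint hatV (t : dtree V) : {set V} :=
  match t with Leaf x => [set x] | Node _ l r => hatV l :|: hatV r end.

Fixpoint hatTS (t : dtree V) : {set V} :=
  match t with
  | Leaf x => [set x]
  | Node OAttach l _ => hatTS l
  | Node _ l r => hatTS l :|: hatTS r
  end.

Fixpoint hatE (t : dtree V) : rel V :=
  match t with
  | Leaf _ => fun _ _ => false
  | Node OFalse l r => fun u w => hatE l u w || hatE r u w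
  | Node _ l r => fun u w =>
      [|| hatE l u w, hatE r u w,
          (u \in hatTS l) && (w \in hatTS r) | (u \in hatTS r) && (w \in hatTS l)]
  end.

Fixpoint is_subtree (s t : dtree V) : Prop :=
  s = t \/ match t with Leaf _ => False | Node _ l r => is_subtree s l \/ is_subtree s r end.

Definition decomp_tree (e : rel V) (T : dtree V) : Prop :=
  [/\ uniq (leaves T), (forall x, x \in leaves T) & (forall u w, hatE T u w = e u w)].

Definition cnbhd (u : dtree V) (S : {set V}) : {set V} :=
  S :|: [set w in hatV u | [exists s in S, hatE u s w]].

Definition has_pm (u : dtree V) (W : {set V}) : Prop :=
  exists M : {set {set V}},
    (forall m, m \in M -> exists x y, [/\ x != y, m = [set x; y], x \in W, y \in W & hatE u x y])
    /\ (forall x, x \in W -> #|[set m in M | x \in m]| = 1).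

Definition kfeasible (u : dtree V) (k : nat) (S : {set V}) : Prop :=
  [/\ S \subset hatV u, hatV u :\: hatTS u \subset cnbhd u S &
      exists X : {set V}, [/\ X \subset S :&: hatTS u, #|X| = k & has_pm u (S :\: X)]].

Definition gamma_is (u : dtree V) (k m : nat) : Prop :=
  (exists S, kfeasible u k S /\ #|S| = m) /\ (forall S, kfeasible u k S -> m <= #|S|).

Definition min_is (u : dtree V) (m : nat) : Prop :=
  (exists k, k <= #|hatTS u| /\ gamma_is u k m) /\
  (forall k m', k <= #|hatTS u| -> gamma_is u k m' -> m <= m').

Definition alpha_is (u : dtree V) (a : nat) : Prop :=
  a <= #|hatTS u| /\ (exists m, min_is u m /\ gamma_is u a m) /\
  (forall k m, k <= #|hatTS u| -> min_is u m -> gamma_is u k m -> a <= k).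

Definition beta_is (u : dtree V) (b : nat) : Prop :=
  b <= #|hatTS u| /\ (exists m, min_is u m /\ gamma_is u b m) /\
  (forall k m, k <= #|hatTS u| -> min_is u m -> gamma_is u k m -> k <= b).

Definition propP (u : dtree V) : Prop :=
  exists mn a b, [/\ min_is u mn, alpha_is u a, beta_is u b &
    forall k, k <= #|hatTS u| ->
      gamma_is u k (if k <= a then mn + a - k
                    else if b <= k then mn + k - b
                    else if ~~ odd (k - a) then mn
                    else mn.+1)].
End Hat.

From mathcomp Require Import all_boot zify.
From Stdlib Require Import Classical.
Set Implicit Arguments. Unset Strict Implicit. Unset Printing Implicit Defensive.

(* At an attachment node v = vl (+) vr the twin set of v is TS(vl), and the only edges
   between the two sides join TS(vl) to TS(vr).  A k-feasible set S of v therefore splits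
   along the sides: the matching edges crossing between them have their ends in the twin
   sets, and declaring their j left ends and j' <= j right ends unmatched leaves a
   (k + j)-feasible set of vl and a j'-feasible set of vr.  Conversely, given a
   bl-feasible set of vl with unmatched set Xl and an ar-feasible set of vr with unmatched
   set Xr, matching Xr with ar vertices of Xl yields a (bl - ar)-feasible set of v; bl > 0
   is what dominates TS(vr), which is no longer a twin set.  So min(v) = min(vl) + min(vr)
   is attained at bl - ar, and any k attaining it has k + j <= bl and ar <= j' <= j. *)

(* Proves a pointwise set identity: case on every membership of [x] in the goal, the
   relevant inclusions having been moved to the goal as premises. *)
Ltac membership_cases x :=
  repeat match goal with |- context [x \in ?A] => case: (x \in A) end;
  intros; repeat match goal with H : is_true true -> _ |- _ => specialize (H isT) end;
  done.

Section DecompositionTree.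
Variable V : finType.
Implicit Types (t u : dtree V) (S : {set V}).

Lemma hatTS_subset t : hatTS t \subset hatV t.
Proof.
elim: t => [x|[] l IHl r IHr] //=; try exact: setUSS.
exact: subset_trans IHl (subsetUl _ _).
Qed.

Lemma hatE_hatV t x y : hatE t x y -> x \in hatV t.
Proof.
elim: t => [z|o l IHl r IHr] //=; rewrite inE.
have TSl := subsetP (hatTS_subset l) x; have TSr := subsetP (hatTS_subset r) x.
case: o => [|/orP[/IHl->|/IHr->]|]; rewrite ?orbT //;
  by case/or4P=> [/IHl->|/IHr->|/andP[/TSl->]|/andP[/TSr->]]; rewrite ?orbT.
Qed.

Lemma hatE_sym t : symmetric (hatE t).
Proof.
elim: t => [z|[] l IHl r IHr] x y //=; rewrite IHl IHr //;
  by rewrite (andbC (y \in hatTS l)) (andbC (y \in hatTS r)) (orbC (_ && _)).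
Qed.

Lemma hatV_leaves t : hatV t =i leaves t.
Proof. by elim: t => [z|o l IHl r IHr] x; rewrite /= !inE ?IHl ?IHr ?mem_cat. Qed.

Lemma subtree_children_disjoint o l r t :
  is_subtree (Node o l r) t -> uniq (leaves t) -> [disjoint hatV l & hatV r].
Proof.
elim: t => [z|o' l' IHl r' IHr] /=; first by case.
rewrite cat_uniq => + /and3P[uniq_l' disj uniq_r'].
case=> [[_ -> ->]|[/IHl/(_ uniq_l')//|/IHr/(_ uniq_r')//]].
rewrite -setI_eq0; apply/eqP/setP => x; rewrite !inE !hatV_leaves.
by apply/andP => -[xl xr]; move/hasP: disj; apply; exists x.
Qed.

Lemma kfeasible_subset u k S : kfeasible u k S -> S \subset hatV u.
Proof. by case. Qed.

Lemma kfeasible_le_TS u k S : kfeasible u k S -> k <= #|hatTS u|.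
Proof.
case=> _ _ [X [XS <- _]].
by apply: subset_leq_card; apply: subset_trans XS (subsetIr _ _).
Qed.

Lemma kfeasible_gamma u k S : kfeasible u k S -> exists2 m, m <= #|S| & gamma_is u k m.
Proof.
have [n] := ubnP #|S|; elim: n S => // n IHn S ltSn feasS.
have [[S' [feasS' ltS'S]]|noSmaller] :=
  classic (exists S', kfeasible u k S' /\ #|S'| < #|S|).
  have [m leS'm gm] := IHn S' (leq_trans ltS'S ltSn) feasS'.
  by exists m => //; apply: leq_trans leS'm (ltnW ltS'S).
exists #|S| => //; split; first by exists S.
by move=> S' feasS'; rewrite leqNgt; apply/negP => ltS'S; apply: noSmaller; exists S'.
Qed.

Lemma min_is_le u mn k S : min_is u mn -> kfeasible u k S -> mn <= #|S|.
Proof.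
move=> [_ min_le] feasS; have [m leSm gm] := kfeasible_gamma feasS.
exact: leq_trans (min_le _ _ (kfeasible_le_TS feasS) gm) leSm.
Qed.

Lemma gamma_is_min u mn k S : min_is u mn -> kfeasible u k S -> #|S| = mn -> gamma_is u k mn.
Proof. by move=> minu feasS cardS; split=> [|S' /(min_is_le minu)//]; exists S. Qed.

Lemma min_is_uniq u m1 m2 : min_is u m1 -> min_is u m2 -> m1 = m2.
Proof.
move=> [[k1 [le1 g1]] min1] [[k2 [le2 g2]] min2].
by apply/eqP; rewrite eqn_leq (min1 _ _ le2 g2) (min2 _ _ le1 g1).
Qed.

End DecompositionTree.

Section Matching.
Variable V : finType.
Implicit Types (u c : dtree V) (W P Q : {set V}) (M : {set {set V}}).

(* [has_pm u W] is convertibly [exists M, perfect_matching u W M]. *)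
Definition perfect_matching u W M :=
  (forall m, m \in M -> exists x y, [/\ x != y, m = [set x; y], x \in W, y \in W & hatE u x y])
  /\ (forall x, x \in W -> #|[set m in M | x \in m]| = 1).

Lemma perfect_matching_block_subset u W M m :
  perfect_matching u W M -> m \in M -> m \subset W.
Proof. by move=> [edges _] /edges[x [y [_ -> Wx Wy _]]]; rewrite subUset !sub1set Wx Wy. Qed.

Lemma sub_has_pm u c W : (forall x y, hatE u x y -> hatE c x y) -> has_pm u W -> has_pm c W.
Proof.
move=> uc [M [edges cover]]; exists M; split=> // m /edges[x [y [? ? ? ? /uc]]].
by exists x, y.
Qed.

Lemma has_pm_set0 u : has_pm u set0.
Proof. by exists set0; split=> ?; rewrite inE. Qed.

Lemma has_pm_pair u x y : x != y -> hatE u x y -> has_pm u [set x; y].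
Proof.
move=> xy uxy; exists [set [set x; y]]; split=> [m|z zxy].
  by rewrite inE => /eqP->; exists x, y; rewrite !inE !eqxx orbT.
rewrite (_ : [set m in _ | _] = [set [set x; y]]) ?cards1 //.
by apply/setP=> m; rewrite !inE; case: eqP => // ->.
Qed.

Lemma has_pm_setU u W1 W2 :
  [disjoint W1 & W2] -> has_pm u W1 -> has_pm u W2 -> has_pm u (W1 :|: W2).
Proof.
move=> W12 [M1 pm1] [M2 pm2].
have blocks_at M M' W' x : perfect_matching u W' M' -> x \notin W' ->
    [set m in M :|: M' | x \in m] = [set m in M | x \in m].
  move=> pmM' xW'; apply/setP => m; rewrite !inE andb_orl.
  case: (boolP (m \in M')) => [|_]; last by rewrite orbF.
  move/(perfect_matching_block_subset pmM')/subsetP => mW'.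
  by case: (boolP (x \in m)) => [/mW'|_]; rewrite ?(negbTE xW') ?andbF.
exists (M1 :|: M2); split=> [m|x].
  rewrite inE => /orP[/pm1.1|/pm2.1] [x [y [? ? Wx Wy ?]]]; exists x, y;
  by rewrite !inE ?Wx ?Wy ?orbT.
rewrite inE => /orP[xW1|xW2].
  by rewrite (blocks_at _ _ _ _ pm2) ?(disjointFr W12 xW1) ?pm1.2.
by rewrite setUC (blocks_at _ _ _ _ pm1) ?(disjointFl W12 xW2) ?pm2.2.
Qed.

Lemma has_pm_complete_bipartite u P Q : [disjoint P & Q] -> #|P| = #|Q| ->
  {in P & Q, forall p q, hatE u p q} -> has_pm u (P :|: Q).
Proof.
have [n] := ubnP #|Q|; elim: n P Q => // n IHn P Q ltQn PQ cardPQ adjPQ.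
case: (set_0Vmem Q) => [Q0|[q Qq]].
  by move: cardPQ; rewrite Q0 cards0 setU0 => /cards0_eq->; apply: has_pm_set0.
have /set0Pn[p Pp] : P != set0 by rewrite -card_gt0 cardPQ card_gt0; apply/set0Pn; exists q.
have -> : P :|: Q = (P :\ p :|: Q :\ q) :|: [set p; q].
  by rewrite setUACA -!(setUC [set _]) !setD1K.
apply: has_pm_setU; last 1 first.
- by apply: has_pm_pair (adjPQ _ _ Pp Qq); apply: contraTneq Pp => ->; rewrite (disjointFl PQ Qq).
- by rewrite disjoint_sym disjoints_subset subUset !sub1set !inE !eqxx
    (disjointFr PQ Pp) (disjointFl PQ Qq) /= !andbF.
- apply: IHn.
  + by move: ltQn; rewrite (cardsD1 q Q) Qq.
  + exact: disjointW (subsetDl _ _) (subsetDl _ _) PQ.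
  + by move: cardPQ; rewrite (cardsD1 p P) (cardsD1 q Q) Pp Qq => -[].
  + by move=> p' q' /setD1P[_ Pp'] /setD1P[_ Qq']; apply: adjPQ.
Qed.

End Matching.

Definition crossing_ends (V : finType) (W : {set V}) (M : {set {set V}}) (U : {set V}) :=
  [set x in W :&: U | [exists m in M, (x \in m) && ~~ (m \subset U)]].

Section CrossingEnds.
Variables (V : finType) (u : dtree V) (W : {set V}) (M : {set {set V}}).
Hypothesis pmM : perfect_matching u W M.

Lemma perfect_matching_block_uniq x m1 m2 :
  x \in W -> m1 \in M -> x \in m1 -> m2 \in M -> x \in m2 -> m1 = m2.
Proof.
move=> /pmM.2/eqP/cards1P[m0 blocks_x] M1 x1 M2 x2.
have: m1 \in [set m in M | x \in m] by rewrite inE M1 x1.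
have: m2 \in [set m in M | x \in m] by rewrite inE M2 x2.
by rewrite blocks_x !inE => /eqP-> /eqP->.
Qed.

Lemma perfect_matching_partner m x :
  m \in M -> x \in m -> exists y, [/\ m = [set x; y], y \in W, x != y & hatE u x y].
Proof.
move=> /pmM.1[a [b [ab -> Wa Wb uab]]]; rewrite !inE => /orP[]/eqP->; first by exists b.
by exists a; rewrite setUC eq_sym hatE_sym.
Qed.

Lemma crossing_ends_subset U : crossing_ends W M U \subset W :&: U.
Proof. by apply/subsetP => x; rewrite inE => /andP[]. Qed.

Lemma has_pm_uncrossed (U : {set V}) c : {in U &, forall x y, hatE u x y -> hatE c x y} ->
  has_pm c ((W :&: U) :\: crossing_ends W M U).
Proof.
move=> inner.
have uncrossed x m : x \in W :&: U -> x \notin crossing_ends W M U ->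
    m \in M -> x \in m -> m \subset U.
  move=> WUx + Mm xm; apply: contraNT => mU.
  by rewrite inE WUx; apply/existsP; exists m; rewrite Mm xm.
have not_crossing x m : x \in W -> m \in M -> x \in m -> m \subset U ->
    x \notin crossing_ends W M U.
  move=> Wx Mm xm mU; rewrite inE negb_and; apply/orP; right.
  apply/existsP => -[m' /and3P[Mm' xm']]; apply/negP/negPn.
  by rewrite -(perfect_matching_block_uniq Wx Mm xm Mm' xm').
exists [set m in M | m \subset U]; split=> [m|x].
  rewrite inE => /andP[Mm mU]; have [x [y [xy mxy Wx Wy uxy]]] := pmM.1 m Mm.
  have [Ux Uy] : x \in U /\ y \in U by split; apply: (subsetP mU); rewrite mxy !inE eqxx ?orbT.
  have [nYx nYy] : x \notin crossing_ends W M U /\ y \notin crossing_ends W M U.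
    by split; apply: not_crossing Mm _ mU; rewrite // mxy !inE eqxx ?orbT.
  by exists x, y; rewrite !in_setD !in_setI nYx nYy Wx Wy Ux Uy inner.
rewrite inE => /andP[Yx WUx]; rewrite -(pmM.2 x); last by case/setIP: WUx.
apply: eq_card => m; rewrite !inE; apply/andP/andP => [[/andP[]] //|[Mm xm]].
by rewrite Mm (uncrossed x m).
Qed.

Variables U U' : {set V}.
Hypotheses (UU' : [disjoint U & U']) (WUU' : W \subset U :|: U').

Lemma crossing_end_partner x : x \in crossing_ends W M U ->
  exists y, [/\ y \in crossing_ends W M U', hatE u x y & [set x; y] \in M].
Proof.
rewrite inE => /andP[/setIP[Wx Ux] /existsP[m /and3P[Mm xm mU]]].
have [y [mxy Wy xy uxy]] := perfect_matching_partner Mm xm.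
have U'y : y \in U'.
  move/subsetP/(_ y Wy): WUU'; rewrite inE => /orP[Uy|//].
  by case/negP: mU; rewrite mxy subUset !sub1set Ux Uy.
exists y; rewrite -mxy; split=> //.
rewrite !inE Wy U'y /=; apply/existsP; exists m; rewrite Mm mxy !inE eqxx orbT /=.
by apply/negP => /subsetP/(_ x); rewrite !inE eqxx (disjointFr UU' Ux) => /(_ isT).
Qed.

Lemma crossing_ends_TS (TU : {set V}) :
  {in U & U', forall x y, hatE u x y -> x \in TU} -> crossing_ends W M U \subset TU.
Proof.
move=> cross; apply/subsetP => x Yx; have [y [Y'y uxy _]] := crossing_end_partner Yx.
move/subsetP/(_ x Yx)/setIP: (crossing_ends_subset U) => -[_ Ux].
by move/subsetP/(_ y Y'y)/setIP: (crossing_ends_subset U') => -[_ U'y]; apply: cross uxy.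
Qed.

Lemma card_crossing_ends : #|crossing_ends W M U| <= #|crossing_ends W M U'|.
Proof.
pose partner x := odflt x [pick y in crossing_ends W M U' | [set x; y] \in M].
have partnerP x : x \in crossing_ends W M U ->
    (partner x \in crossing_ends W M U') && ([set x; partner x] \in M).
  move=> Yx; rewrite /partner; case: pickP => [y /andP[-> ->] //|none].
  by have [y [Y'y _ Mxy]] := crossing_end_partner Yx; move: (none y); rewrite Y'y Mxy.
have partner_inj : {in crossing_ends W M U &, injective partner}.
  move=> x x' Yx Yx' same; have /andP[Y'y Mxy] := partnerP x Yx.
  have /andP[_] := partnerP x' Yx'; rewrite -same => Mx'y.
  have /setIP[Wy U'y] := subsetP (crossing_ends_subset U') _ Y'y.
  have /setIP[_ Ux] := subsetP (crossing_ends_subset U) _ Yx.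
  have y_in z : partner x \in [set z; partner x] by rewrite !inE eqxx orbT.
  have /setP/(_ x) := perfect_matching_block_uniq Wy Mxy (y_in x) Mx'y (y_in x').
  rewrite !inE eqxx => /esym/orP[/eqP//|/eqP xy].
  by rewrite -xy (disjointFr UU' Ux) in U'y.
rewrite -(card_in_imset partner_inj); apply: subset_leq_card.
by apply/subsetP => _ /imsetP[x Yx ->]; case/andP: (partnerP x Yx).
Qed.

End CrossingEnds.

Section Neighbourhood.
Variable V : finType.
Implicit Types (u c : dtree V) (S : {set V}).

Lemma cnbhd_edge u S s x : s \in S -> x \in hatV u -> hatE u s x -> x \in cnbhd u S.
Proof.
by move=> Ss ux usx; rewrite !inE ux; apply/orP; right; apply/existsP; exists s; rewrite Ss.
Qed.

Lemma cnbhdS c u S S' : hatV c \subset hatV u -> (forall x y, hatE c x y -> hatE u x y) ->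
  S \subset S' -> cnbhd c S \subset cnbhd u S'.
Proof.
move=> cu sub_cu SS'; apply/subsetP => x; rewrite !inE => /orP[/(subsetP SS')->//|].
case/andP=> /(subsetP cu) ux /existsP[s /andP[Ss /sub_cu usx]].
by rewrite ux; apply/orP; right; apply/existsP; exists s; rewrite (subsetP SS').
Qed.

Lemma cnbhd_restrict u c S x : x \in hatV c ->
  (forall s, hatE u s x -> (s \in hatV c) && hatE c s x) ->
  x \in cnbhd u S -> x \in cnbhd c (S :&: hatV c).
Proof.
move=> cx nbrs; rewrite !inE cx andbT => /orP[->//|/andP[_ /existsP[s /andP[Ss /nbrs]]]].
by case/andP=> cs csx; apply/orP; right; apply/existsP; exists s; rewrite !inE Ss cs.
Qed.

End Neighbourhood.

Lemma exists_subset_card (T : finType) (A : {set T}) n :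
  n <= #|A| -> exists2 B : {set T}, B \subset A & #|B| = n.
Proof.
case/card_geqP => s [uniq_s <- sA]; exists [set x in s].
  by apply/subsetP => x; rewrite inE => /sA.
by rewrite cardsE (card_uniqP uniq_s).
Qed.

Section Attach.
Variables (V : finType) (vl vr : dtree V).
Hypothesis lr_disjoint : [disjoint hatV vl & hatV vr].
Local Notation v := (Node OAttach vl vr).
Local Notation A := (hatTS vl).
Local Notation B := (hatTS vr).
Local Notation Vl := (hatV vl).
Local Notation Vr := (hatV vr).

Lemma attach_edge_l x y : hatE v x y -> x \in Vl -> hatE vl x y \/ (x \in A) && (y \in B).
Proof.
move=> /= + Vlx; have nVrx := disjointFr lr_disjoint Vlx.
case/or4P=> [|/hatE_hatV|/andP[-> ->]|/andP[/(subsetP (hatTS_subset vr))]];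
  by [left | right | rewrite nVrx].
Qed.

Lemma attach_edge_r x y : hatE v x y -> x \in Vr -> hatE vr x y \/ (x \in B) && (y \in A).
Proof.
move=> /= + Vrx; have nVlx := disjointFl lr_disjoint Vrx.
case/or4P=> [/hatE_hatV|/=|/andP[/(subsetP (hatTS_subset vl))]|/andP[-> ->]];
  by [left | right | rewrite nVlx].
Qed.

Lemma attach_edge_inner_l : {in Vl &, forall x y, hatE v x y -> hatE vl x y}.
Proof.
move=> x y Vlx Vly vxy; case: (attach_edge_l vxy Vlx) => // /andP[_].
move/(subsetP (hatTS_subset vr)) => Vry.
by rewrite (disjointFr lr_disjoint Vly) in Vry.
Qed.

Lemma attach_edge_inner_r : {in Vr &, forall x y, hatE v x y -> hatE vr x y}.
Proof.
move=> x y Vrx Vry vxy; case: (attach_edge_r vxy Vrx) => // /andP[_].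
move/(subsetP (hatTS_subset vl)) => Vly.
by rewrite (disjointFr lr_disjoint Vly) in Vry.
Qed.

Lemma attach_edge_cross_l : {in Vl & Vr, forall x y, hatE v x y -> x \in A}.
Proof.
move=> x y Vlx Vry vxy; case: (attach_edge_l vxy Vlx) => [|/andP[] //].
rewrite hatE_sym => /hatE_hatV Vly.
by rewrite (disjointFr lr_disjoint Vly) in Vry.
Qed.

Lemma attach_edge_cross_r : {in Vr & Vl, forall x y, hatE v x y -> x \in B}.
Proof.
move=> x y Vrx Vly vxy; case: (attach_edge_r vxy Vrx) => [|/andP[] //].
rewrite hatE_sym => /hatE_hatV Vry.
by rewrite (disjointFr lr_disjoint Vly) in Vry.
Qed.

Lemma attach_nbr_l x :
  x \in Vl -> x \notin A -> forall s, hatE v s x -> (s \in Vl) && hatE vl s x.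
Proof.
move=> Vlx nAx s; rewrite hatE_sym => /attach_edge_l/(_ Vlx)[vlxs|/andP[Ax _]].
  by rewrite hatE_sym in vlxs; rewrite vlxs (hatE_hatV vlxs).
by rewrite Ax in nAx.
Qed.

Lemma attach_nbr_r x :
  x \in Vr -> x \notin B -> forall s, hatE v s x -> (s \in Vr) && hatE vr s x.
Proof.
move=> Vrx nBx s; rewrite hatE_sym => /attach_edge_r/(_ Vrx)[vrxs|/andP[Bx _]].
  by rewrite hatE_sym in vrxs; rewrite vrxs (hatE_hatV vrxs).
by rewrite Bx in nBx.
Qed.

Lemma kfeasible_attach kl kr Sl Sr : kr <= kl -> 0 < kl ->
  kfeasible vl kl Sl -> kfeasible vr kr Sr -> kfeasible v (kl - kr) (Sl :|: Sr).
Proof.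
move=> kr_le_kl kl_gt0 [SlV doml [Xl [XlSA cardXl pml]]] [SrV domr [Xr [XrSB cardXr pmr]]].
have [XlS XlA] := (subset_trans XlSA (subsetIl _ _), subset_trans XlSA (subsetIr _ _)).
have [XrS XrB] := (subset_trans XrSB (subsetIl _ _), subset_trans XrSB (subsetIr _ _)).
have [Z ZXl cardZ] : exists2 Z : {set V}, Z \subset Xl & #|Z| = #|Xr|.
  by apply: exists_subset_card; rewrite cardXl cardXr.
have vl_v x y : hatE vl x y -> hatE v x y by move=> /= ->.
have vr_v x y : hatE vr x y -> hatE v x y by move=> /= ->; rewrite orbT.
have lift_l : cnbhd vl Sl \subset cnbhd v (Sl :|: Sr).
  exact: (cnbhdS (u := v) (subsetUl _ _) vl_v (subsetUl _ _)).
have lift_r : cnbhd vr Sr \subset cnbhd v (Sl :|: Sr).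
  exact: (cnbhdS (u := v) (subsetUr _ _) vr_v (subsetUr _ _)).
split; first exact: setUSS.
- apply/subsetP => x /setDP[/setUP[Vlx|Vrx] nAx].
  + by apply/(subsetP lift_l)/(subsetP doml); rewrite !inE Vlx andbT.
  + have [Bx|nBx] := boolP (x \in B).
      have /set0Pn[s Xls] : Xl != set0 by rewrite -card_gt0 cardXl.
      have vsx : hatE v s x by rewrite /= (subsetP XlA s Xls) Bx !orbT.
      by apply: (cnbhd_edge _ _ vsx); rewrite !inE ?(subsetP XlS s Xls) ?Vrx ?orbT.
    by apply/(subsetP lift_r)/(subsetP domr); rewrite !inE Vrx nBx.
exists (Xl :\: Z); split.
- by apply: subset_trans (subsetDl _ _) _; apply: subset_trans XlSA (setSI _ (subsetUl _ _)).
- by rewrite cardsD (setIidPr ZXl) cardZ cardXl cardXr.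
have -> : (Sl :|: Sr) :\: (Xl :\: Z) = ((Sl :\: Xl) :|: (Sr :\: Xr)) :|: (Z :|: Xr).
  apply/setP => x; rewrite !inE.
  move: (subsetP ZXl x) (subsetP XlS x) (subsetP XrS x) (subsetP SlV x) (subsetP SrV x)
    (@disjointFr _ _ _ x lr_disjoint).
  membership_cases x.
have ZV : Z \subset Vl := subset_trans ZXl (subset_trans XlS SlV).
have XrV : Xr \subset Vr := subset_trans XrS SrV.
apply: has_pm_setU; [|apply: has_pm_setU|apply: has_pm_complete_bipartite].
- rewrite -setI_eq0; apply/eqP/setP => x; rewrite !inE.
  move: (subsetP ZXl x) (subsetP XlS x) (subsetP XrS x) (subsetP SlV x) (subsetP SrV x)
    (@disjointFr _ _ _ x lr_disjoint).
  membership_cases x.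
- exact: disjointW (subsetDl _ _) (subsetDl _ _) (disjointW SlV SrV lr_disjoint).
- exact: sub_has_pm vl_v pml.
- exact: sub_has_pm vr_v pmr.
- exact: disjointW ZV XrV lr_disjoint.
- by rewrite cardZ.
- by move=> p q /(subsetP ZXl)/(subsetP XlA) Ap /(subsetP XrB) Bq /=; rewrite Ap Bq !orbT.
Qed.

Section Split.
Variables (S X : {set V}) (M : {set {set V}}).
Hypotheses (SV : S \subset hatV v) (domS : hatV v :\: A \subset cnbhd v S).
Hypotheses (XSA : X \subset S :&: A) (pmM : perfect_matching v (S :\: X) M).
Local Notation W := (S :\: X).

Lemma kfeasible_attach_l : kfeasible vl (#|X| + #|crossing_ends W M Vl|) (S :&: Vl).
Proof.
have WV : W \subset Vl :|: Vr := subset_trans (subsetDl _ _) SV.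
have YlA := crossing_ends_TS pmM lr_disjoint WV attach_edge_cross_l.
have YlWV := crossing_ends_subset W M Vl.
have YlSV : crossing_ends W M Vl \subset S :&: Vl := subset_trans YlWV (setSI _ (subsetDl _ _)).
have XA := subset_trans XSA (subsetIr _ _).
have XV := subset_trans XA (hatTS_subset vl).
split; first exact: subsetIr.
  apply/subsetP => x /setDP[Vlx nAx].
  have vx : x \in cnbhd v S by apply: (subsetP domS); rewrite in_setD nAx /= inE Vlx.
  exact: cnbhd_restrict Vlx (attach_nbr_l Vlx nAx) vx.
exists (X :|: crossing_ends W M Vl); split.
- rewrite subUset !subsetI XA YlA (subset_trans XSA (subsetIl _ _)) XV.
  by rewrite (subset_trans YlSV (subsetIl _ _)) (subset_trans YlSV (subsetIr _ _)).
- rewrite cardsU (_ : _ :&: _ = set0) ?cards0 ?subn0 //; apply: disjoint_setI0.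
  rewrite -setI_eq0; apply/eqP/setP => x; rewrite !inE.
  move: (subsetP YlWV x); rewrite !inE; membership_cases x.
by rewrite -setDDl -setIDAC; exact: (has_pm_uncrossed pmM attach_edge_inner_l).
Qed.

Lemma kfeasible_attach_r : kfeasible vr #|crossing_ends W M Vr| (S :&: Vr).
Proof.
have WV : W \subset Vr :|: Vl by rewrite setUC; apply: subset_trans (subsetDl _ _) SV.
have rl_disjoint : [disjoint Vr & Vl] by rewrite disjoint_sym.
have YrB := crossing_ends_TS pmM rl_disjoint WV attach_edge_cross_r.
have YrWV := crossing_ends_subset W M Vr.
have XV := subset_trans (subset_trans XSA (subsetIr _ _)) (hatTS_subset vl).
split; first exact: subsetIr.
  apply/subsetP => x /setDP[Vrx nBx].
  have nAx : x \notin A.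
    by apply: contraL Vrx => /(subsetP (hatTS_subset vl)) Vlx; rewrite (disjointFr lr_disjoint Vlx).
  have vx : x \in cnbhd v S by apply: (subsetP domS); rewrite in_setD nAx /= inE Vrx orbT.
  exact: cnbhd_restrict Vrx (attach_nbr_r Vrx nBx) vx.
exists (crossing_ends W M Vr); split=> //.
  by rewrite subsetI YrB andbT; apply: subset_trans YrWV _; apply: setSI; apply: subsetDl.
have -> : S :&: Vr = W :&: Vr.
  by rewrite setIDAC; apply/esym/setDidPl; exact: disjointW (subsetIr _ _) XV rl_disjoint.
exact: (has_pm_uncrossed pmM attach_edge_inner_r).
Qed.

End Split.

Lemma kfeasible_attach_split k (S : {set V}) : kfeasible v k S ->
  exists j j', [/\ kfeasible vl (k + j) (S :&: Vl), kfeasible vr j' (S :&: Vr) & j' <= j].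
Proof.
case=> SV domS [X [XSA <- [M pmM]]].
have WV : S :\: X \subset Vr :|: Vl by rewrite setUC; apply: subset_trans (subsetDl _ _) SV.
exists #|crossing_ends (S :\: X) M Vl|, #|crossing_ends (S :\: X) M Vr|; split.
- exact: kfeasible_attach_l.
- exact: kfeasible_attach_r.
- by apply: (card_crossing_ends pmM _ WV); rewrite disjoint_sym.
Qed.

Lemma card_attach_split (S : {set V}) : S \subset hatV v -> #|S| = #|S :&: Vl| + #|S :&: Vr|.
Proof.
move=> SV; rewrite -(cardsID Vl S); congr (_ + _); apply: eq_card => x; rewrite !inE.
move: (subsetP SV x) (@disjointFr _ _ _ x lr_disjoint); rewrite inE; membership_cases x.
Qed.

Lemma min_is_attach_le ml mr k S :
  min_is vl ml -> min_is vr mr -> kfeasible v k S -> ml + mr <= #|S|.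
Proof.
move=> minl minr feasS; have [j [j' [feasl feasr _]]] := kfeasible_attach_split feasS.
rewrite (card_attach_split (kfeasible_subset feasS)).
by rewrite leq_add ?(min_is_le minl feasl) ?(min_is_le minr feasr).
Qed.

Lemma beta_is_attach bl ar : 0 < bl -> ar <= bl ->
  beta_is vl bl -> alpha_is vr ar -> beta_is v (bl - ar).
Proof.
move=> bl_gt0 ar_le_bl [bl_le [[ml [minl gl]] bl_max]] [_ [[mr [minr gr]] ar_min]].
have [[Sl [feasl cardSl]] _] := gl; have [[Sr [feasr cardSr]] _] := gr.
have feasS := kfeasible_attach ar_le_bl bl_gt0 feasl feasr.
have cardS : #|Sl :|: Sr| = ml + mr.
  have lr := disjointW (kfeasible_subset feasl) (kfeasible_subset feasr) lr_disjoint.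
  by rewrite cardsU cardSl cardSr (disjoint_setI0 lr) cards0 subn0.
have le_TS : bl - ar <= #|hatTS v| by rewrite (leq_trans (leq_subr _ _) bl_le).
have gv : gamma_is v (bl - ar) (ml + mr).
  by split=> [|S /(min_is_attach_le minl minr)]; first exists (Sl :|: Sr).
have minv : min_is v (ml + mr).
  by split=> [|k m _ [[S [/(min_is_attach_le minl minr) + <-]] _]] //; exists (bl - ar).
split=> //; split=> [|k m _ /(min_is_uniq minv) <- [[S [feas cardS']] _]].
  by exists (ml + mr).
have [j [j' [feasl' feasr' le_j'j]]] := kfeasible_attach_split feas.
have [cardl cardr] : #|S :&: Vl| = ml /\ #|S :&: Vr| = mr.
  have := card_attach_split (kfeasible_subset feas).
  have := min_is_le minl feasl'; have := min_is_le minr feasr'; lia.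
have := bl_max _ _ (kfeasible_le_TS feasl') minl (gamma_is_min minl feasl' cardl).
have := ar_min _ _ (kfeasible_le_TS feasr') minr (gamma_is_min minr feasr' cardr).
lia.
Qed.

End Attach.

Theorem lemma32 (V : finType) (e : rel V) (T vl vr : dtree V) (al bl ar br : nat) :
  symmetric e -> irreflexive e -> dist_hereditary e ->
  decomp_tree e T -> is_subtree (Node OAttach vl vr) T ->
  propP vl -> propP vr ->
  alpha_is vl al -> beta_is vl bl -> alpha_is vr ar -> beta_is vr br ->
  ar <= bl -> ~ (al = 0 /\ br = 0) -> ~ (ar = 0 /\ bl = 0) ->
  beta_is (Node OAttach vl vr) (bl - ar).
Proof.
move=> _ _ _ [uniqT _ _] subT _ _ _ betal alphar _ ar_le_bl _ not_both0.
have lr_disjoint := subtree_children_disjoint subT uniqT.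
have bl_gt0 : 0 < bl.
  by rewrite lt0n; apply/eqP => bl0; apply: not_both0; move: ar_le_bl; rewrite bl0 leqn0 => /eqP.
exact: (beta_is_attach lr_disjoint bl_gt0 ar_le_bl betal alphar).
Qed.
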